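(* There are constants $C_7$ and $D$ (depending only on $r$) and, for each $\eta>0$, a constant $\varepsilon_5(\eta)>0$ such that for every $\eta>0$, all large enough $n$, every $m\le\varepsilon_5(\eta)n$ and every $U\subset V_n$ with $|U|=m$, $$\mathbb P\big(|\partial U|\le(r-2-\eta)|U|\big)\le C_7\exp\big[-(1+\eta/4)\,m\log(n/m)+D m\big].$$
   Context: Fix an integer $r\ge3$, let $V_n=\{1,\dots,n\}$ with $rn$ even, and let $\mathbb P$ be the law of the random multigraph $G_n$ on $V_n$ obtained by giving each vertex $r$ half-edges and pairing all $rn$ half-edges uniformly at random. Write $y\sim x$ if $y$ and $x$ are joined by an edge of $G_n$. For $U\subset V_n$, $\partial U:=\{y\in U^c: y\sim x\text{ for some }x\in U\}$. *)

From mathcomp Require Import all_boot.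
From Stdlib Require Import Reals.

Set Implicit Arguments.
Unset Strict Implicit.
Unset Printing Implicit Defensive.

(* Configuration model: vertex set V_n = 'I_n, each vertex x carries r
   half-edges (x, i), i : 'I_r. *)
Definition halfedge (n r : nat) : finType := ('I_n * 'I_r)%type.

Definition is_pairing (n r : nat) (f : {ffun halfedge n r -> halfedge n r}) : bool :=
  [forall h, (f (f h) == h) && (f h != h)].

Definition pairings (n r : nat) : {set {ffun halfedge n r -> halfedge n r}} :=
  [set f | is_pairing f].

Definition adj (n r : nat) (f : {ffun halfedge n r -> halfedge n r}) (y x : 'I_n) : bool :=
  [exists h : halfedge n r, (h.1 == x) && ((f h).1 == y)].

Definition boundary (n r : nat) (f : {ffun halfedge n r -> halfedge n r})
  (U : {set 'I_n}) : {set 'I_n} :=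
  [set y | (y \notin U) && [exists x in U, adj f y x]].

Definition prob (n r : nat) (E : pred {ffun halfedge n r -> halfedge n r}) : R :=
  (INR #|[set f in pairings n r | E f]| / INR #|pairings n r|)%R.

(* For a pairing f, let W(f) consist of the half-edges at U matched outside U
   together with the half-edge of smaller rank of each edge inside U.  Then f
   maps W(f) into the half-edges at U and its boundary B, avoiding W(f), and
   r|U| + |B| <= 2|W(f)|.  Exposing the partners one at a time, each is uniform
   among the rn - 2j unmatched half-edges (conjugating by a transposition), so
   for fixed W and B this event has probability at most
   (r(m + |B|) / (rn - 2|W|))^|W| <= (2rm/n)^|W|.  With |W| >= (rm + |B|)/2 and
   |B| <= (r - 2 - eta) m this is at most (2r)^(rm) (m/n)^((1 + eta/2) m) (m/n)^|B|;
   summing over the 2^(rm) choices of W and over B, where sum_B (m/n)^|B| =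
   (1 + m/n)^n <= e^m, gives the bound. *)

From mathcomp Require Import all_boot.
From Stdlib Require Import Reals.
From Stdlib Require Import Lra Psatz.
(* Importing Reals rebinds [_ ^ _] in nat_scope; re-importing ssrnat restores [expn]. *)
From mathcomp Require Import ssrnat perm zify.

Set Implicit Arguments.
Unset Strict Implicit.
Unset Printing Implicit Defensive.

Section FixedPointFreeInvolutions.
Variable T : finType.
Implicit Types (f : {ffun T -> T}) (ps : seq (T * T)).

Definition fpf_involutions : {set {ffun T -> T}} :=
  [set f : {ffun T -> T} | [forall h, (f (f h) == h) && (f h != h)]].

Lemma fpf_involutionP f :
  f \in fpf_involutions -> involutive f /\ forall h, f h != h.
Proof. by rewrite inE => /forallP fP; split=> h; case/andP: (fP h) => /eqP. Qed.

Definition conj_fun (s : T -> T) f : {ffun T -> T} := [ffun h => s (f (s h))].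

Lemma conj_funK s : involutive s -> involutive (conj_fun s).
Proof. by move=> sK f; apply/ffunP => h; rewrite !ffunE !sK. Qed.

Lemma conj_fpf_involution s f :
  involutive s -> f \in fpf_involutions -> conj_fun s f \in fpf_involutions.
Proof.
move=> sK /fpf_involutionP[fK fN]; rewrite inE; apply/forallP => h.
rewrite !ffunE sK fK sK eqxx /=; apply: contra (fN (s h)) => /eqP e.
by rewrite -{2}e sK.
Qed.

Definition matched ps := unzip1 ps ++ unzip2 ps.

Definition extensions ps : {set {ffun T -> T}} :=
  [set f in fpf_involutions | all (fun p => f p.1 == p.2) ps].

Lemma extensions_nil : extensions [::] = fpf_involutions.
Proof. by apply/setP => f; rewrite inE andbT. Qed.

Lemma matched_cons x z ps : perm_eq (matched ((x, z) :: ps)) (x :: z :: matched ps).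
Proof. by rewrite /matched /= perm_cons -cat1s perm_catCA. Qed.

Lemma uniq_matched_cons ps x z :
  uniq (matched ps) -> x \notin matched ps -> z \notin matched ps -> x != z ->
  uniq (matched ((x, z) :: ps)).
Proof. by move=> Mu xM zM xz; rewrite (perm_uniq (matched_cons _ _ _)) /= inE negb_or xM zM xz. Qed.

Lemma extension_partner_unmatched ps f x :
  f \in extensions ps -> x \notin matched ps -> f x \notin matched ps.
Proof.
rewrite inE => /andP[/fpf_involutionP[fK _] /allP fps]; apply: contra.
rewrite !mem_cat => /orP[] /mapP[p pps fxp]; have /eqP fp := fps p pps.
  by rewrite -(fK x) fxp fp (map_f _ pps) orbT.
by rewrite -(fK x) fxp -fp fK (map_f _ pps).
Qed.

(* Conjugating by the transposition of two unmatched points moves the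
   partner of x from z to z' and fixes the rest of the partial matching. *)
Lemma card_extensions_cons_eq ps x z z' :
  z \notin matched ps -> z' \notin matched ps -> x != z -> x != z' ->
  #|extensions ((x, z) :: ps)| = #|extensions ((x, z') :: ps)|.
Proof.
suff le_ext a b : a \notin matched ps -> b \notin matched ps -> x != a -> x != b ->
    #|extensions ((x, a) :: ps)| <= #|extensions ((x, b) :: ps)|.
  by move=> *; apply/eqP; rewrite eqn_leq !le_ext.
move=> aU bU xa xb; have sK := @tpermK _ a b.
rewrite -(card_imset _ (can_inj (conj_funK sK))); apply/subset_leq_card/subsetP.
move=> _ /imsetP[f /setIdP[fP /= /andP[/eqP fx fps]] ->].
apply/setIdP; split; first exact: conj_fpf_involution.
have xfix : tperm a b x = x by apply: tpermD; rewrite eq_sym.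
rewrite /= ffunE xfix fx tpermL eqxx /=.
have fixed y : y \in matched ps -> tperm a b y = y.
  by move=> yM; apply: tpermD; apply/eqP => e; [move: aU | move: bU]; rewrite e yM.
apply/allP => p pps; have /eqP fp := allP fps p pps.
have p1M : p.1 \in matched ps by rewrite mem_cat map_f.
have p2M : p.2 \in matched ps by rewrite mem_cat map_f ?orbT.
by rewrite ffunE (fixed _ p1M) fp (fixed _ p2M).
Qed.

Lemma extensions_cons ps x z :
  extensions ((x, z) :: ps) = [set f in extensions ps | f x == z].
Proof. by apply/setP => f; rewrite !inE /= andbA andbAC. Qed.

Lemma card_unmatched_other ps x : uniq (matched ps) -> x \notin matched ps ->
  #|[set y | (y \notin matched ps) && (y != x)]| = #|T| - size (matched ps) - 1.
Proof.
move=> Mu xM; have -> : [set y | (y \notin matched ps) && (y != x)] =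
    ~: (x |: [set y | y \in matched ps]) by apply/setP => y; rewrite !inE negb_or andbC.
by rewrite cardsCs setCK cardsU1 inE (negPf xM) cardsE (card_uniqP Mu) subnDA subnAC.
Qed.

Lemma card_extensions_cons ps x z :
  uniq (matched ps) -> x \notin matched ps -> z \notin matched ps -> x != z ->
  #|extensions ((x, z) :: ps)| * (#|T| - size (matched ps) - 1) = #|extensions ps|.
Proof.
move=> Mu xM zM xz; rewrite -(card_unmatched_other Mu xM) mulnC -sum_nat_const.
rewrite -[#|extensions ps|]sum1_card [RHS](partition_big (fun f => f x)
  [in [set y | (y \notin matched ps) && (y != x)]]) /= => [|f fE]; last first.
  have [_ fN] := fpf_involutionP (setIdP fE).1.
  by rewrite inE extension_partner_unmatched ?fN.
apply: eq_bigr => y /[!inE] /andP[yM yx].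
rewrite (card_extensions_cons_eq zM yM xz) 1?eq_sym // extensions_cons -sum1_card.
by apply: eq_bigl => f; rewrite inE.
Qed.

Section MapsInto.
Variable S : {set T}.

Definition maps_into_outside xs f := all (fun x => (f x \in S) && (f x \notin xs)) xs.

Lemma card_extensions_maps_into xs ps :
  uniq xs -> uniq (matched ps) -> {in xs, forall x, x \notin matched ps} ->
  #|[set f in extensions ps | maps_into_outside xs f]| *
    (#|T| - size (matched ps) - 2 * size xs) ^ size xs
  <= #|S| ^ size xs * #|extensions ps|.
Proof.
elim: xs ps => [|x xs IHxs] ps.
  by rewrite !expn0 muln1 mul1n => *; apply/subset_leq_card/subsetP => f /setIdP[].
rewrite cons_uniq => /andP[xxs xsu] Mu xsM; have xM := xsM x (mem_head x xs).
set K := _ - _ - _; set A := [set f in _ | _].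
pose Z := [set z in S | [&& z \notin matched ps, z != x & z \notin xs]].
have partA : #|A| = \sum_(z in Z) #|[set f in A | f x == z]|.
  rewrite -sum1_card (partition_big (fun f => f x) [in Z]) /= => [|f].
    by apply: eq_bigr => z _; rewrite -sum1_card; apply: eq_bigl => f; rewrite !inE.
  rewrite inE => /andP[fE /andP[/andP[fxS]]].
  rewrite inE negb_or => /andP[fxx fxxs] _.
  by rewrite !inE fxS fxx fxxs extension_partner_unmatched.
have bound_z z : z \in Z ->
    #|[set f in A | f x == z]| * K ^ size xs <= #|S| ^ size xs * #|extensions ((x, z) :: ps)|.
  rewrite inE => /and4P[zS zM zx zxs].
  have Mu' : uniq (matched ((x, z) :: ps)) by apply: uniq_matched_cons; rewrite // eq_sym.
  have xsM' : {in xs, forall y, y \notin matched ((x, z) :: ps)}.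
    move=> y yxs; rewrite (perm_mem (matched_cons _ _ _)) !inE !negb_or xsM ?inE ?yxs ?orbT // andbT.
    by apply/andP; split; apply/eqP => e; [move: xxs | move: zxs]; rewrite -e yxs.
  apply: leq_trans (IHxs _ xsu Mu' xsM'); rewrite (perm_size (matched_cons _ _ _)) /=.
  have -> : #|T| - (size (matched ps)).+2 - 2 * size xs = K by rewrite /K /=; lia.
  rewrite leq_mul2r; apply/orP; right; apply/subset_leq_card/subsetP => f.
  rewrite !inE => /andP[/andP[/andP[fP fps] /andP[_ fxs]] /eqP fx].
  rewrite /= fP fx eqxx fps; apply/allP => y yxs; case/andP: (allP fxs y yxs) => -> /=.
  by rewrite inE negb_or => /andP[].
rewrite expnS mulnCA mulnC partA !big_distrl /=.
apply: (@leq_trans (\sum_(z in Z) #|S| ^ size xs * #|extensions ps|)).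
  apply: leq_sum => z zZ; have /[!inE] /and4P[_ zM zx _] := zZ.
  have KM : K <= #|T| - size (matched ps) - 1 by rewrite /K /=; lia.
  apply: leq_trans (leq_mul (bound_z z zZ) KM) _.
  by rewrite -mulnA card_extensions_cons // eq_sym.
rewrite sum_nat_const expnS -mulnA leq_mul2r; apply/orP; right.
by apply/subset_leq_card/subsetP => z /[!inE] /andP[].
Qed.

Definition fpf_involutions_into (X : {set T}) : {set {ffun T -> T}} :=
  [set f in fpf_involutions | [forall x in X, f x \in S :\: X]].

Lemma card_fpf_involutions_into X :
  #|fpf_involutions_into X| * (#|T| - 2 * #|X|) ^ #|X| <= #|S| ^ #|X| * #|fpf_involutions|.
Proof.
have := @card_extensions_maps_into (enum X) [::] (enum_uniq _) isT (fun _ _ => isT).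
rewrite /= subn0 -cardE => H; rewrite extensions_nil in H.
apply: leq_trans H; rewrite leq_mul2r; apply/orP; right.
apply/subset_leq_card/subsetP => f /setIdP[fP /forall_inP fX].
rewrite inE fP; apply/allP => x; rewrite mem_enum => xX.
by have := fX x xX; rewrite !inE mem_enum andbC.
Qed.
End MapsInto.
End FixedPointFreeInvolutions.

Lemma leq_card_bigcup (T I : finType) (P : pred I) (F : I -> {set T}) :
  #|\bigcup_(i | P i) F i| <= \sum_(i | P i) #|F i|.
Proof.
elim/big_rec2: _ => [|i m A _ leAm]; first by rewrite cards0.
exact: leq_trans (leq_card_setU _ _).1 (leq_add (leqnn _) leAm).
Qed.

Lemma sum_subsets_pow (I : finType) (a b : nat) :
  \sum_(J : {set I}) a ^ #|J| * b ^ #|~: J| = (a + b) ^ #|I|.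
Proof.
rewrite -prod_nat_const (bigA_distr _ _ (fun _ => a) (fun _ => b)).
apply: eq_bigr => J _; rewrite (bigID [in J]) /= -!prod_nat_const.
congr (_ * _); first by apply: eq_bigr => i ->.
by apply: eq_big => [i | i]; rewrite ?inE // => /negPf ->.
Qed.

Lemma leq_mul_pow_ratio (g p s d a n k : nat) :
  0 < d -> s * n <= a * d -> g * d ^ k <= s ^ k * p -> g * n ^ k <= a ^ k * p.
Proof.
move=> d_gt0 snad gds; rewrite -(leq_pmul2r (_ : 0 < d ^ k)) ?expn_gt0 ?d_gt0 //.
have pow_le : (s * n) ^ k <= (a * d) ^ k by elim: k {gds} => // k IH; rewrite !expnS leq_mul.
apply: (@leq_trans (s ^ k * p * n ^ k)); first by rewrite mulnAC leq_mul2r gds orbT.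
by rewrite mulnAC -expnMn mulnAC -expnMn leq_mul2r pow_le orbT.
Qed.

Section RealLemmas.
Local Open Scope R_scope.

Lemma INR_sum_le_scaled (I : finType) (P : pred I) (g h : I -> nat) (c : R) :
  (forall i, P i -> INR (g i) <= c * INR (h i)) ->
  INR (\sum_(i | P i) g i)%N <= c * INR (\sum_(i | P i) h i)%N.
Proof.
move=> gh; apply: (big_ind2 (fun a b => INR a <= c * INR b)) => //=.
  by rewrite Rmult_0_r; lra.
by move=> a1 b1 a2 b2 ab1 ab2; rewrite !plus_INR; lra.
Qed.

Lemma exp_le_exp x y : x <= y -> exp x <= exp y.
Proof. by case/Rle_lt_or_eq_dec => [/exp_increasing|->]; lra. Qed.

Lemma pow_exp_ln a k : 0 < a -> a ^ k = exp (INR k * ln a).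
Proof. by move=> a_gt0; rewrite -Rpower_pow. Qed.

Lemma pow_1_plus_le_exp x k : 0 <= x -> (1 + x) ^ k <= exp (INR k * x).
Proof.
move=> x_ge0; rewrite -[x in INR k * x]ln_exp -pow_exp_ln; last exact: exp_pos.
by apply: pow_incr; have := exp_ineq1_le x; split; lra.
Qed.

Lemma INR_leq (a b : nat) : (a <= b)%N -> INR a <= INR b.
Proof. by move/leP/le_INR. Qed.

Lemma INR_expn (a k : nat) : INR (a ^ k)%N = INR a ^ k.
Proof. by elim: k => [|k IH] //; rewrite expnS mult_INR IH. Qed.

Lemma ln_div x y : 0 < x -> 0 < y -> ln (x / y) = ln x - ln y.
Proof. by move=> x0 y0; rewrite ln_mult ?ln_Rinv //; apply: Rinv_0_lt_compat. Qed.

Lemma exponent_le (m r b k L T eta : R) :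
  0 <= L -> 0 <= T -> 0 < eta -> 0 <= m ->
  k <= m * r -> m * r + b <= 2 * k -> b <= (r - 2 - eta) * m ->
  k * (L - T) <= m * r * L - (1 + eta / 4) * m * T - b * T.
Proof.
move=> L0 T0 eta0 m0 kmr mrbk bm.
have : 0 <= (m * r - k) * L by apply: Rmult_le_pos; lra.
have : 0 <= (2 * k - m * r - b) * T by apply: Rmult_le_pos; lra.
have : 0 <= ((r - 2 - eta) * m - b) * T by apply: Rmult_le_pos; lra.
have : 0 <= eta * m * T by apply: Rmult_le_pos => //; apply: Rmult_le_pos; lra.
nra.
Qed.

Lemma pow_ratio_INR (a c b : nat) : (b <= c)%N -> 0 < INR c ->
  (INR a / INR c) ^ b = INR (a ^ b * c ^ (c - b)) / INR c ^ c.
Proof.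
move=> bc c0; have -> : INR c ^ c = INR c ^ b * INR c ^ (c - b).
  by rewrite -pow_add; congr (_ ^ _); lia.
rewrite mult_INR !INR_expn.
rewrite /Rdiv Rpow_mult_distr pow_inv; field.
by split; apply: pow_nonzero; lra.
Qed.
End RealLemmas.

Section ConfigurationModel.
Variables n r : nat.
Local Notation pairing := {ffun halfedge n r -> halfedge n r}.
Implicit Types (f : pairing) (A B U : {set 'I_n}).

(* Without pairings (rn odd), [prob] is [0 / 0 = 0] in Stdlib's reals, so
   the bound needs no parity hypothesis. *)
Lemma prob_le_of_card (E : pred pairing) (c : R) : (0 <= c)%R ->
  (INR #|[set f in pairings n r | E f]| <= c * INR #|pairings n r|)%R -> (prob E <= c)%R.
Proof.
move=> c0 Ec; rewrite /prob; case: (posnP #|pairings n r|) => [-> | Pi_gt0].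
  by rewrite /= /Rdiv Rinv_0 Rmult_0_r.
have PiR : (0 < INR #|pairings n r|)%R by apply/lt_0_INR/ltP.
by apply/(Rmult_le_reg_r _ _ _ PiR); rewrite /Rdiv Rmult_assoc Rinv_l ?Rmult_1_r //; lra.
Qed.

Definition halfedges_at A : {set halfedge n r} := [set h | h.1 \in A].

Lemma card_halfedges_at A : #|halfedges_at A| = #|A| * r.
Proof.
have -> : halfedges_at A = setX A [set: 'I_r] by apply/setP => h; rewrite !inE andbT.
by rewrite cardsX cardsT card_ord.
Qed.

Variable U : {set 'I_n}.

Definition out_halfedges f := [set h in halfedges_at U | (f h).1 \notin U].

Definition inner_halfedges f :=
  [set h in halfedges_at U | ((f h).1 \in U) && (enum_rank h < enum_rank (f h))].

Definition witness f := out_halfedges f :|: inner_halfedges f.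

Lemma witness_subset f : witness f \subset halfedges_at U.
Proof. by apply/subsetP => h; rewrite !inE => /orP[] /andP[]. Qed.

Lemma pairing_witness_into f : f \in pairings n r ->
  f \in fpf_involutions_into (halfedges_at (U :|: boundary f U)) (witness f).
Proof.
move=> fP; have [fK _] := fpf_involutionP fP; rewrite inE fP.
apply/forall_inP => h; rewrite !inE fK => /orP[] /andP[hU].
  move=> fhU; rewrite (negPf fhU) /=.
  by apply/exists_inP; exists h.1; rewrite //; apply/existsP; exists h; rewrite !eqxx.
by case/andP=> fhU lt; rewrite fhU hU /= ltnNge ltnW.
Qed.

Lemma card_boundary_le_out f : #|boundary f U| <= #|out_halfedges f|.
Proof.
apply: leq_trans (leq_imset_card (fun h => (f h).1) _); apply/subset_leq_card/subsetP.
move=> y /[!inE] /andP[yU /exists_inP[x xU /existsP[h /andP[/eqP hx /eqP fhy]]]].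
by apply/imsetP; exists h; rewrite // !inE hx xU fhy yU.
Qed.

(* Each edge inside U contributes two half-edges, exactly one of which is inner. *)
Lemma card_inside_le_inner f : f \in pairings n r ->
  #|[set h in halfedges_at U | (f h).1 \in U]| <= 2 * #|inner_halfedges f|.
Proof.
move=> /fpf_involutionP[fK fN].
apply: leq_trans (_ : #|inner_halfedges f :|: f @: inner_halfedges f| <= _).
  apply/subset_leq_card/subsetP => h /[!inE] /andP[hU fhU].
  case: (ltngtP (enum_rank h) (enum_rank (f h))) => [lt | gt | eq_rank].
  - by rewrite hU fhU.
  - by apply/orP; right; apply/imsetP; exists (f h); rewrite ?fK // !inE fhU fK hU gt.
  - by have := fN h; rewrite -(enum_rank_inj (val_inj eq_rank)) eqxx.
by rewrite mul2n -addnn (leq_trans (leq_card_setU _ _).1) // leq_add2l leq_imset_card.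
Qed.

Lemma card_witness f : f \in pairings n r ->
  #|U| * r + #|boundary f U| <= 2 * #|witness f|.
Proof.
move=> fP; rewrite -card_halfedges_at.
rewrite -(cardsID [set h | (f h).1 \in U] (halfedges_at U)).
have -> : halfedges_at U :\: [set h | (f h).1 \in U] = out_halfedges f.
  by apply/setP => h; rewrite !inE andbC.
have -> : halfedges_at U :&: [set h | (f h).1 \in U] = [set h in halfedges_at U | (f h).1 \in U].
  by apply/setP => h; rewrite !inE.
rewrite /witness cardsU (_ : _ :&: _ = set0) ?cards0 ?subn0; last first.
  by apply/setP => h; rewrite !inE; case: ((f h).1 \in U); rewrite ?andbF.
have := card_inside_le_inner fP; have := card_boundary_le_out f; lia.
Qed.

Definition witness_candidates B : {set {set halfedge n r}} :=
  [set X : {set halfedge n r} | (X \subset halfedges_at U) && (#|U| * r + #|B| <= 2 * #|X|)].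

Lemma card_boundary_event_le (P : pred nat) :
  #|[set f in pairings n r | P #|boundary f U|]| <=
  \sum_(B : {set 'I_n} | P #|B|) \sum_(X in witness_candidates B)
     #|fpf_involutions_into (halfedges_at (U :|: B)) X|.
Proof.
set G := fun B X => fpf_involutions_into (halfedges_at (U :|: B)) X.
apply: (@leq_trans (\sum_(B : {set 'I_n} | P #|B|) #|\bigcup_(X in witness_candidates B) G B X|)).
  apply: (@leq_trans #|\bigcup_(B : {set 'I_n} | P #|B|) \bigcup_(X in witness_candidates B) G B X|).
    apply/subset_leq_card/subsetP => f /setIdP[fP PB].
    apply/bigcupP; exists (boundary f U) => //; apply/bigcupP; exists (witness f).
      by rewrite inE witness_subset card_witness.
    exact: pairing_witness_into.
  exact: leq_card_bigcup.
by apply: leq_sum => B _; apply: leq_card_bigcup.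
Qed.

Lemma sum_witness_candidates_le (P : pred {set 'I_n}) (a c : nat) :
  \sum_(B | P B) \sum_(X in witness_candidates B) a ^ #|B| * c ^ (n - #|B|)
  <= 2 ^ (#|U| * r) * (a + c) ^ n.
Proof.
have cardC (B : {set 'I_n}) : n - #|B| = #|~: B| by rewrite [RHS]cardsCs setCK card_ord.
apply: (@leq_trans (\sum_(B : {set 'I_n}) 2 ^ (#|U| * r) * (a ^ #|B| * c ^ #|~: B|))).
  apply: leq_trans (_ : \sum_(B | P B) 2 ^ (#|U| * r) * (a ^ #|B| * c ^ #|~: B|) <= _).
    apply: leq_sum => B _; rewrite sum_nat_const cardC leq_mul2r; apply/orP; right.
    rewrite -card_halfedges_at -card_powerset; apply/subset_leq_card/subsetP => X.
    by rewrite !inE => /andP[].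
  by rewrite [X in _ <= X](bigID P) leq_addr.
by rewrite -big_distrr sum_subsets_pow card_ord.
Qed.
End ConfigurationModel.

Section Estimate.
Local Open Scope R_scope.

Definition boundary_exponent_const (r : nat) : R :=
  INR r * ln 2 + INR r * ln (2 * INR r) + 1.

Variables (r n m : nat) (eta : R).
Hypotheses (r_ge3 : (3 <= r)%N) (eta_gt0 : 0 < eta) (m_gt0 : (0 < m)%N)
  (n_large : (4 * r * m <= n)%N).

Let T := ln (INR n / INR m).

Lemma INR_r_ge3 : 3 <= INR r.
Proof. by have /= := INR_leq r_ge3; lra. Qed.

Lemma INR_m_ge1 : 1 <= INR m.
Proof. by have /= := INR_leq m_gt0; lra. Qed.

Lemma INR_n_large : 4 * INR r * INR m <= INR n.
Proof. by have := INR_leq n_large; rewrite !mult_INR /=; lra. Qed.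

Lemma INR_n_gt0 : 0 < INR n.
Proof. by have := INR_n_large; have := INR_r_ge3; have := INR_m_ge1; nra. Qed.

Lemma log_ratio_ge0 : 0 <= T.
Proof.
have := INR_n_large; have := INR_r_ge3; have := INR_m_ge1 => m1 r3 n4.
have : ln (INR m) < ln (INR n) by apply: ln_increasing; nra.
rewrite /T ln_div; nra.
Qed.

Lemma leq_count_mul_expn (g p b k s : nat) :
  (m + b <= r * m)%N -> (m * r + b <= 2 * k)%N -> (k <= m * r)%N ->
  (s <= (m + b) * r)%N -> (g * (n * r - 2 * k) ^ k <= s ^ k * p)%N ->
  (g * n ^ k <= (2 * r * m) ^ k * p)%N.
Proof. by move=> *; apply: (@leq_mul_pow_ratio _ _ s (n * r - 2 * k)) => //; nia. Qed.

Lemma INR_count_le_exp (g p b k : nat) :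
  INR b <= (INR r - 2 - eta) * INR m ->
  (m * r + b <= 2 * k)%N -> (k <= m * r)%N -> (b <= n)%N ->
  (g * n ^ k <= (2 * r * m) ^ k * p)%N ->
  INR g <= INR p * exp (INR (m * r) * ln (2 * INR r) - (1 + eta / 4) * INR m * T)
           / INR n ^ n * INR (m ^ b * n ^ (n - b)).
Proof.
move=> bm /INR_leq mrbk /INR_leq kmr bn /INR_leq gnk.
have r3 := INR_r_ge3; have m1 := INR_m_ge1; have n0 := INR_n_gt0.
have L0 : 0 <= ln (2 * INR r) by rewrite -ln_1; apply/Rlt_le/ln_increasing; lra.
have two : INR 2 = 2 by rewrite /=; ring.
rewrite plus_INR !mult_INR two in mrbk kmr; rewrite !mult_INR !INR_expn !mult_INR two in gnk.
set rho := 2 * INR r * INR m / INR n.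
have g_le : INR g <= INR p * rho ^ k.
  apply: (Rmult_le_reg_r (INR n ^ k)); first exact: pow_lt.
  have -> : INR p * rho ^ k * INR n ^ k = (2 * INR r * INR m) ^ k * INR p.
    by rewrite /rho /Rdiv Rpow_mult_distr pow_inv; field; apply: pow_nonzero; lra.
  exact: gnk.
have rho_exp : rho ^ k = exp (INR k * (ln (2 * INR r) - T)).
  have rho0 : 0 < rho by apply: Rdiv_lt_0_compat; nra.
  rewrite pow_exp_ln // /rho ln_div ?ln_mult /T ?ln_div //; try nra.
  by congr (exp (_ * _)); ring.
have mn_exp : (INR m / INR n) ^ b = exp (- (INR b * T)).
  have mn0 : 0 < INR m / INR n by apply: Rdiv_lt_0_compat; lra.
  rewrite pow_exp_ln // /T !ln_div; try lra.
  by congr exp; ring.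
apply: (Rle_trans _ _ _ g_le).
set E := exp _; have -> : INR p * E / INR n ^ n * INR (m ^ b * n ^ (n - b))%N =
    INR p * (E * (INR (m ^ b * n ^ (n - b))%N / INR n ^ n)) by rewrite /Rdiv; ring.
rewrite -pow_ratio_INR // mn_exp rho_exp /E -exp_plus.
apply: Rmult_le_compat_l; first exact: pos_INR.
apply: exp_le_exp; rewrite mult_INR.
have := exponent_le L0 log_ratio_ge0 eta_gt0 (pos_INR m) kmr mrbk bm; lra.
Qed.

Lemma INR_card_fpf_into_le (U B : {set 'I_n}) (X : {set halfedge n r}) :
  #|U| = m -> INR #|B| <= (INR r - 2 - eta) * INR m -> X \in witness_candidates r U B ->
  INR #|fpf_involutions_into (halfedges_at r (U :|: B)) X| <=
  INR #|pairings n r| * exp (INR (m * r) * ln (2 * INR r) - (1 + eta / 4) * INR m * T)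
    / INR n ^ n * INR (m ^ #|B| * n ^ (n - #|B|)).
Proof.
move=> Um bm; rewrite inE Um => /andP[XU mrbX].
have kmr : (#|X| <= m * r)%N by rewrite -Um -card_halfedges_at subset_leq_card.
have mbrm : (m + #|B| <= r * m)%N.
  by apply/leP/INR_le; rewrite plus_INR mult_INR; have := pos_INR m; nra.
have sU : (#|halfedges_at r (U :|: B)| <= (m + #|B|) * r)%N.
  by rewrite card_halfedges_at leq_mul2r -Um (leq_card_setU _ _).1 orbT.
have bn : (#|B| <= n)%N by rewrite -[n in (_ <= n)%N]card_ord max_card.
apply: (INR_count_le_exp bm mrbX kmr bn (leq_count_mul_expn mbrm mrbX kmr sU _)).
by have := card_fpf_involutions_into (halfedges_at r (U :|: B)) X; rewrite card_prod !card_ord.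
Qed.

Lemma union_bound_total_le (p : nat) :
  INR p * exp (INR (m * r) * ln (2 * INR r) - (1 + eta / 4) * INR m * T) / INR n ^ n
    * INR (2 ^ (m * r) * (m + n) ^ n) <=
  exp (- (1 + eta / 4) * INR m * T + boundary_exponent_const r * INR m) * INR p.
Proof.
have n0 := INR_n_gt0; have m1 := INR_m_ge1.
have growth : (1 + INR m / INR n) ^ n <= exp (INR m).
  have -> : exp (INR m) = exp (INR n * (INR m / INR n)) by congr exp; field; lra.
  by apply: pow_1_plus_le_exp; apply/Rlt_le/Rdiv_lt_0_compat; lra.
have split_pow : (INR m + INR n) ^ n = INR n ^ n * (1 + INR m / INR n) ^ n.
  by rewrite -Rpow_mult_distr; congr (_ ^ _); field; lra.
have two : INR 2 = 2 by rewrite /=; ring.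
set E := exp _; rewrite mult_INR !INR_expn plus_INR split_pow two.
have -> : INR p * E / INR n ^ n * (2 ^ (m * r) * (INR n ^ n * (1 + INR m / INR n) ^ n)) =
    INR p * (E * 2 ^ (m * r) * (1 + INR m / INR n) ^ n).
  by field; apply: pow_nonzero; lra.
rewrite Rmult_comm; apply: Rmult_le_compat_r; first exact: pos_INR.
have E2 : 0 <= E * 2 ^ (m * r) by apply: Rmult_le_pos; [exact/Rlt_le/exp_pos | apply: pow_le; lra].
apply: Rle_trans (Rmult_le_compat_l _ _ _ E2 growth) _.
rewrite pow_exp_ln /E -?exp_plus; last lra.
by apply: Req_le; congr exp; rewrite /boundary_exponent_const mult_INR; ring.
Qed.

Lemma prob_small_boundary_le (U : {set 'I_n}) : #|U| = m ->
  prob (fun f : {ffun halfedge n r -> halfedge n r} =>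
          if Rle_dec (INR #|boundary f U|) ((INR r - 2 - eta) * INR #|U|) then true else false)
  <= exp (- (1 + eta / 4) * INR m * T + boundary_exponent_const r * INR m).
Proof.
move=> Um; apply: prob_le_of_card; first exact/Rlt_le/exp_pos.
set P := fun k : nat => if Rle_dec (INR k) ((INR r - 2 - eta) * INR #|U|) then true else false.
apply: Rle_trans (INR_leq (card_boundary_event_le r U P)) _.
pose c := INR #|pairings n r|
  * exp (INR (m * r) * ln (2 * INR r) - (1 + eta / 4) * INR m * T) / INR n ^ n.
have c0 : 0 <= c.
  rewrite /c /Rdiv; repeat apply: Rmult_le_pos; first exact: pos_INR.
    exact/Rlt_le/exp_pos.
  exact/Rlt_le/Rinv_0_lt_compat/pow_lt/INR_n_gt0.
apply: (Rle_trans _ (c * INR (\sum_(B : {set 'I_n} | P #|B|)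
    \sum_(X in witness_candidates r U B) m ^ #|B| * n ^ (n - #|B|))%N)).
  apply: INR_sum_le_scaled => B PB; apply: INR_sum_le_scaled => X XB.
  by apply: INR_card_fpf_into_le => //; move: PB; rewrite /P Um; case: Rle_dec.
apply: (Rle_trans _ (c * INR (2 ^ (#|U| * r) * (m + n) ^ n)%N)).
  apply: Rmult_le_compat_l => //; apply: INR_leq.
  exact: (sum_witness_candidates_le r U (fun B => P #|B|)).
by rewrite Um; apply: union_bound_total_le.
Qed.
End Estimate.

Theorem lemma5 (r : nat) (hr : 3 <= r) :
  exists (C7 D : R) (eps5 : R -> R),
    (forall eta : R, (0 < eta)%R -> (0 < eps5 eta)%R) /\
    forall eta : R, (0 < eta)%R ->
      exists N : nat, forall n : nat, N <= n -> ~~ odd (r * n) ->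
        forall (m : nat), (INR m <= eps5 eta * INR n)%R ->
        forall U : {set 'I_n}, #|U| = m ->
          (prob (fun f : {ffun halfedge n r -> halfedge n r} =>
                  if Rle_dec (INR #|boundary f U|) ((INR r - 2 - eta) * INR #|U|)
                  then true else false)
            <= C7 * exp (- (1 + eta / 4) * INR m * ln (INR n / INR m) + D * INR m))%R.
Proof.
have r3 : (3 <= INR r)%R by have /= := INR_leq hr; lra.
exists 1%R, (boundary_exponent_const r), (fun _ => / (4 * INR r))%R.
split=> [eta _ | eta eta0]; first by apply: Rinv_0_lt_compat; lra.
exists 0 => n _ _ m mn U Um; rewrite Rmult_1_l.
case: (posnP m) => [m0 | m_gt0].
  rewrite m0 (_ : (_ + _)%R = 0%R) ?exp_0 /=; last ring.
  apply: prob_le_of_card; first lra.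
  by rewrite Rmult_1_l; apply/INR_leq/subset_leq_card/subsetP => f /setIdP[].
apply: prob_small_boundary_le => //; apply/leP/INR_le; rewrite !mult_INR.
have := Rmult_le_compat_l (4 * INR r) _ _ _ mn; rewrite -Rmult_assoc Rinv_r /=; lra.
Qed.
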